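(* Let $\alpha$ be a sequence such that $M(\alpha)$ is a bounded multiplicative Hankel operator on $\ell^2(\mathbb{N})$. For $0<r<1$ let $\alpha_r=D_r\alpha$. Then $M(\alpha_r)$ is a compact operator on $\ell^2(\mathbb{N})$, $\|M(\alpha_r)\|_{\mathcal{B}(\ell^2(\mathbb{N}))}\le\|M(\alpha)\|_{\mathcal{B}(\ell^2(\mathbb{N}))}$, and $M(\alpha_r)\to M(\alpha)$ and $M(\alpha_r)^*\to M(\alpha)^*$ in the strong operator topology as $r\to1$.
   Context: For a sequence $\alpha\colon\mathbb{N}\to\mathbb{C}$, $M(\alpha)$ is defined by $\langle M(\alpha)a,b\rangle_{\ell^2(\mathbb{N})}=\sum_{n,m}a(n)\overline{b(m)}\alpha(nm)$ for finitely supported $a,b$, and is bounded if it extends to a bounded operator on $\ell^2(\mathbb{N})$. Let $p_1<p_2<\dots$ be the primes. For a sequence $a$ and $0<r<1$, $D_ra(n)=r^{\sum_{j\ge1}j\kappa_j}a(n)$ where $n=\prod_{j\ge1}p_j^{\kappa_j}$. *)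

From Stdlib Require Import Reals List.
From Coquelicot Require Import Coquelicot.
From mathcomp Require ssreflect ssrbool ssrnat seq prime.
Open Scope R_scope.

(* Convention: an element x of l^2(N), N = {1,2,...}, is represented by
   x : nat -> C with  x k  the coordinate at the positive integer k+1.
   The symbol alpha : nat -> C is indexed by the positive integers themselves
   (alpha 0 is irrelevant). *)

Definition Op := (nat -> C) -> (nat -> C).

Fixpoint csum (N : nat) (f : nat -> C) : C :=
  match N with
  | O => RtoC 0
  | S N' => Cplus (csum N' f) (f N')
  end.

Definition l2 (x : nat -> C) : Prop := ex_series (fun k => (Cmod (x k)) ^ 2).
Definition l2norm (x : nat -> C) : R := sqrt (Series (fun k => (Cmod (x k)) ^ 2)).

Definition finsupp (N : nat) (x : nat -> C) : Prop := forall k, (N <= k)%nat -> x k = RtoC 0.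

Definition finip (N : nat) (x y : nat -> C) : C := csum N (fun k => Cmult (x k) (Cconj (y k))).

Definition Mform (alpha : nat -> C) (N : nat) (a b : nat -> C) : C :=
  csum N (fun n => csum N (fun m =>
    Cmult (Cmult (a n) (Cconj (b m))) (alpha ((n + 1) * (m + 1))%nat))).

Definition op_bounded_by (T : Op) (K : R) : Prop :=
  forall x, l2 x -> l2norm (T x) <= K * l2norm x.

Definition bdd_linear_op (T : Op) : Prop :=
  (forall x, l2 x -> l2 (T x)) /\
  (forall x y (c : C), l2 x -> l2 y ->
     forall k, T (fun j => Cplus (x j) (Cmult c (y j))) k = Cplus (T x k) (Cmult c (T y k))) /\
  (exists K, op_bounded_by T K).

Definition extends_M (alpha : nat -> C) (T : Op) : Prop :=
  bdd_linear_op T /\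
  forall N a b, finsupp N a -> finsupp N b -> finip N (T a) b = Mform alpha N a b.

(* S is the adjoint of the bounded operator T (tested on the dense subspace
   of finitely supported sequences, which determines a bounded S) *)
Definition is_adjoint (T S : Op) : Prop :=
  bdd_linear_op S /\
  forall N a b, finsupp N a -> finsupp N b -> finip N a (S b) = finip N (T a) b.

Definition compact_op (T : Op) : Prop :=
  forall xs : nat -> (nat -> C), (forall k, l2 (xs k)) ->
    (exists B, forall k, l2norm (xs k) <= B) ->
    exists phi : nat -> nat, (forall k, (phi k < phi (S k))%nat) /\
      exists y, l2 y /\
        forall eps, 0 < eps -> exists N, forall k, (N <= k)%nat ->
          l2norm (fun j => Cminus (T (xs (phi k)) j) (y j)) < eps.

Definition SOT_conv_left1 (Tr : R -> Op) (T : Op) : Prop :=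
  forall x, l2 x -> forall eps, 0 < eps -> exists delta, 0 < delta /\
    forall r, 1 - delta < r < 1 -> l2norm (fun j => Cminus (Tr r x j) (T x j)) < eps.

Definition prime_index (p : nat) : nat := seq.count prime.prime (seq.iota 1 p).
(* sum_j j * kappa_j  where n = prod_j p_j^kappa_j *)
Definition dweight (n : nat) : nat :=
  fold_right (fun p acc => (prime_index p * prime.logn p n + acc)%nat) 0%nat (prime.primes n).

Definition Dr (r : R) (a : nat -> C) : nat -> C :=
  fun n => Cmult (RtoC (r ^ dweight n)) (a n).

(* Because [dweight] is additive, [dweight (n m) = dweight n + dweight m], the
   form of [M (Dr r alpha)] is the form of [M alpha] sandwiched between two
   copies of the diagonal operator [D = diag (r ^ dweight n)], whose norm is at
   most 1. A bounded operator is determined by its form on finitely supported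
   sequences, so every bounded extension of [M (Dr r alpha)] equals [D T D] on
   l^2 and its adjoint equals [D T^* D]; the norm bound follows. Only finitely
   many [n] have [dweight n <= W], so the entries of [D] tend to 0 and [D T D]
   is compact: a diagonal extraction makes the images converge coordinatewise,
   and the small entries of [D] control the tails uniformly. Finally, Bernoulli's
   inequality [1 - r ^ w <= w (1 - r)] and a tail estimate give [D -> 1]
   strongly as [r -> 1], hence [D T D -> T] and [D T^* D -> T^*] strongly. *)

From Stdlib Require Import Reals Lra Lia FunctionalExtensionality ClassicalEpsilon Rtopology.
From Coquelicot Require Import Coquelicot.
From mathcomp Require ssreflect ssrbool eqtype ssrnat seq div prime bigop.
Open Scope R_scope.

(** * Additivity and growth of [dweight] *)

Module PrimeWeight.
Import ssreflect ssrbool eqtype ssrnat seq div prime bigop.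
Local Open Scope nat_scope.

Lemma dweightE n : dweight n = \sum_(p <- primes n) prime_index p * logn p n.
Proof. by rewrite /dweight; elim: (primes n) => [|p s IH]; rewrite ?big_nil ?big_cons //= IH. Qed.

Lemma dweight_iota n B : 0 < n -> n < B ->
  dweight n = \sum_(p <- iota 0 B) prime_index p * logn p n.
Proof.
move=> n_gt0 nB; rewrite dweightE.
rewrite [RHS](bigID (mem (primes n))) /= [X in _ + X]big1 ?addn0; last first.
  move=> p p_n; have : ~~ (0 < logn p n) by rewrite logn_gt0 (negbTE p_n).
  by rewrite lt0n negbK => /eqP ->; rewrite muln0.
rewrite -[RHS]big_filter; apply: perm_big; apply: uniq_perm.
- exact: primes_uniq.
- exact/filter_uniq/iota_uniq.
move=> p; rewrite mem_filter mem_iota add0n /=.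
case p_n: (p \in primes n) => //=; move: p_n; rewrite mem_primes => /and3P [_ _ p_dvd].
by rewrite (leq_ltn_trans (dvdn_leq n_gt0 p_dvd) nB).
Qed.

Lemma dweight_mul n m : 0 < n -> 0 < m ->
  dweight (n * m)%coq_nat = (dweight n + dweight m)%coq_nat.
Proof.
rewrite multE plusE => n_gt0 m_gt0; have nm_gt0 : 0 < n * m by rewrite muln_gt0 n_gt0.
rewrite !(@dweight_iota _ (n * m).+1) ?ltnS ?leq_pmulr ?leq_pmull // -big_split /=.
by apply: eq_bigr => p _; rewrite lognM // mulnDr.
Qed.

Lemma prime_indexD p q : p <= q ->
  prime_index q = prime_index p + count prime (iota p.+1 (q - p)).
Proof. by move=> pq; rewrite /prime_index -[in LHS](subnKC pq) iotaD count_cat add1n. Qed.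

Lemma prime_index_le p q : p <= q -> prime_index p <= prime_index q.
Proof. by move=> pq; rewrite (prime_indexD _ _ pq) leq_addr. Qed.

Lemma prime_index_lt p q : prime q -> p < q -> prime_index p < prime_index q.
Proof.
move=> q_pr pq; rewrite (prime_indexD _ _ (ltnW pq)) -[X in X < _]addn0 ltn_add2l -has_count.
by apply/hasP; exists q; rewrite // mem_iota pq addSn subnKC ?ltnSn // ltnW.
Qed.

Lemma prime_index_gt0 p : prime p -> 0 < prime_index p.
Proof. by move=> p_pr; apply: (prime_index_lt 0 p p_pr (prime_gt0 p_pr)). Qed.

Lemma prime_index_unbounded W : exists P, W < prime_index P.
Proof.
elim: W => [|W [P WP]]; first by exists 2; apply: prime_index_gt0.
have [q Pq q_pr] := prime_above P; exists q.
exact: leq_ltn_trans WP (prime_index_lt _ _ q_pr Pq).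
Qed.

Lemma prod_le_exp (s : seq nat) (F : nat -> nat) c :
  (forall i, i \in s -> F i <= c) -> \prod_(i <- s) F i <= c ^ size s.
Proof.
elim: s => [|a s IH] le_Fc; rewrite ?big_nil ?big_cons ?expnS //.
by rewrite leq_mul ?le_Fc ?mem_head // IH // => i s_i; rewrite le_Fc // inE s_i orbT.
Qed.

(* If [dweight n <= W], every prime factor [p] of [n] satisfies
   [prime_index p <= W] and [logn p n <= W], so [n <= (P ^ W) ^ P] where
   [prime_index P > W]. *)
Lemma dweight_unbounded W : exists M, forall n, (M <= n)%coq_nat -> (W < dweight n)%coq_nat.
Proof.
have [P WP] := prime_index_unbounded W.
have P_gt0 : 0 < P by case: P WP.
exists ((P ^ W) ^ P).+1 => n /leP Mn; apply/ltP; rewrite ltnNge; apply/negP => nW.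
have n_gt0 : 0 < n by apply: leq_trans Mn.
have factor_small p : p \in primes n -> p < P /\ logn p n <= W.
  move=> p_n; have p_pr : prime p by move: p_n; rewrite mem_primes => /andP [].
  have logn_gt0 : 0 < logn p n by rewrite logn_gt0.
  have term_le : prime_index p * logn p n <= W.
    by apply: leq_trans nW; rewrite dweightE (bigD1_seq p p_n (primes_uniq n)) leq_addr.
  split; last by apply: leq_trans term_le; rewrite leq_pmull // prime_index_gt0.
  rewrite ltnNge; apply/negP => Pp.
  have := leq_trans (prime_index_le _ _ Pp) (leq_trans (leq_pmulr _ logn_gt0) term_le).
  by rewrite leqNgt WP.
suff : n <= (P ^ W) ^ P by rewrite leqNgt Mn.
rewrite [X in X <= _](prod_prime_decomp n_gt0) prime_decompE big_map /=.
apply: leq_trans (@prod_le_exp _ _ (P ^ W) _) _.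
  move=> p p_n; have [pP logW] := factor_small p p_n.
  by apply: leq_trans (leq_pexp2l P_gt0 logW); rewrite leq_exp2r ?logn_gt0 // ltnW.
rewrite leq_pexp2l ?expn_gt0 ?P_gt0 // -[X in _ <= X](size_iota 0 P).
apply: uniq_leq_size; first exact: primes_uniq.
by move=> p p_n; rewrite mem_iota add0n; case: (factor_small p p_n).
Qed.

End PrimeWeight.

(** * Series of nonnegative terms *)

Lemma ex_series_zero : ex_series (fun _ : nat => 0).
Proof.
  exists 0; apply is_series_Reals; intros eps eps_gt0; exists 0%nat; intros n _.
  rewrite sum_cte; unfold R_dist; rewrite Rmult_0_l, Rminus_0_r, Rabs_R0; exact eps_gt0.
Qed.

Lemma series_le_series (a b : nat -> R) :
  (forall k, 0 <= a k <= b k) -> ex_series b -> ex_series a /\ Series a <= Series b.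
Proof.
  intros ab b_sum; split; [|now apply Series_le].
  apply (ex_series_le a b); [|exact b_sum].
  intros k; change (Rabs (a k) <= b k); rewrite Rabs_pos_eq; apply ab.
Qed.

Lemma series_le_combination (a b c : nat -> R) (beta gamma : R) :
  0 <= beta -> 0 <= gamma -> (forall k, 0 <= b k) -> (forall k, 0 <= c k) ->
  (forall k, 0 <= a k <= beta * b k + gamma * c k) -> ex_series b -> ex_series c ->
  ex_series a /\ Series a <= beta * Series b + gamma * Series c.
Proof.
  intros beta_ge0 gamma_ge0 b_ge0 c_ge0 abc b_sum c_sum.
  assert (bc_sum : ex_series (fun k => beta * b k + gamma * c k)).
  { exact (ex_series_plus _ _ (ex_series_scal_l beta b b_sum) (ex_series_scal_l gamma c c_sum)). }
  rewrite <- (Series_scal_l beta b), <- (Series_scal_l gamma c).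
  rewrite <- (Series_plus (fun k => beta * b k) (fun k => gamma * c k))
    by (exact (ex_series_scal_l beta b b_sum) || exact (ex_series_scal_l gamma c c_sum)).
  now apply series_le_series.
Qed.

Lemma sum_f_R0_le_Series (a : nat -> R) N :
  (forall k, 0 <= a k) -> ex_series a -> sum_f_R0 a N <= Series a.
Proof.
  intros a_ge0 a_sum; apply sum_incr; [|exact a_ge0].
  apply is_series_Reals, Series_correct, a_sum.
Qed.

Lemma Series_ge0 (a : nat -> R) : (forall k, 0 <= a k) -> ex_series a -> 0 <= Series a.
Proof.
  intros a_ge0 a_sum; apply (Rle_trans _ (sum_f_R0 a 0)); [apply a_ge0|].
  now apply sum_f_R0_le_Series.
Qed.

Lemma series_of_bounded_sums (a : nat -> R) A :
  (forall k, 0 <= a k) -> (forall N, sum_f_R0 a N <= A) -> ex_series a /\ Series a <= A.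
Proof.
  intros a_ge0 sums_le.
  destruct (growing_cv (sum_f_R0 a)) as [l sums_cv].
  - intros n; simpl; specialize (a_ge0 (S n)); lra.
  - exists A; intros x [n ->]; apply sums_le.
  - assert (a_series : is_series a l) by (apply is_series_Reals; exact sums_cv).
    split; [now exists l|]; rewrite (is_series_unique a l a_series).
    apply (is_lim_seq_le (sum_f_R0 a) (fun _ => A) l A sums_le).
    + apply is_lim_seq_Reals, sums_cv.
    + apply is_lim_seq_const.
Qed.

Lemma term_le_sum_f_R0 (a : nat -> R) k N :
  (forall j, 0 <= a j) -> (k <= N)%nat -> a k <= sum_f_R0 a N.
Proof.
  intros a_ge0 kN; induction kN as [|N _ IH]; simpl.
  - destruct k; simpl; [lra|]. pose proof (cond_pos_sum a k a_ge0); lra.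
  - specialize (a_ge0 (S N)); lra.
Qed.

Lemma Series_remainder_small (a : nat -> R) eps :
  ex_series a -> 0 < eps -> exists N, Series a - sum_f_R0 a N <= eps.
Proof.
  intros a_sum eps_gt0.
  destruct (proj1 (is_series_Reals a _) (Series_correct a a_sum) eps eps_gt0) as [N HN].
  exists N; specialize (HN N (le_n N)); unfold R_dist in HN; apply Rabs_def2 in HN; lra.
Qed.

Lemma Series_split_le (a b : nat -> R) N h :
  (forall k, 0 <= a k) -> (forall k, (k <= N)%nat -> a k <= h) ->
  (forall k, (N < k)%nat -> a k <= b k) -> ex_series b ->
  ex_series a /\ Series a <= INR (S N) * h + (Series b - sum_f_R0 b N).
Proof.
  intros a_ge0 head_le tail_le b_sum.
  assert (b_tail_sum : ex_series (fun k => b (S N + k)%nat))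
    by now apply (ex_series_incr_n b (S N)).
  destruct (series_le_series (fun k => a (S N + k)%nat) (fun k => b (S N + k)%nat))
    as [a_tail_sum a_tail_le]; [|exact b_tail_sum|].
  { intros k; split; [apply a_ge0|apply tail_le; lia]. }
  assert (a_sum : ex_series a) by now apply (ex_series_incr_n a (S N)).
  split; [exact a_sum|].
  rewrite (Series_incr_n a (S N)), (Series_incr_n b (S N)) by (lia || assumption).
  simpl Init.Nat.pred.
  assert (sum_f_R0 a N <= h * INR (S N)) by (rewrite <- sum_cte; now apply sum_Rle).
  lra.
Qed.

(** * Sequences in l^2 and bounded operators *)

Definition abs2 (x : nat -> C) (k : nat) : R := Cmod (x k) ^ 2.

Lemma abs2_ge0 x k : 0 <= abs2 x k.
Proof. apply pow2_ge_0. Qed.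
#[local] Hint Resolve abs2_ge0 : core.

Lemma Cmod_scale_sqr (c : R) (z : C) : Cmod (RtoC c * z) ^ 2 = c ^ 2 * Cmod z ^ 2.
Proof. rewrite Cmod_mult, Cmod_R, <- (pow2_abs c); ring. Qed.

Lemma Cmod_add_sqr_le (a b : C) : Cmod (a + b) ^ 2 <= 2 * Cmod a ^ 2 + 2 * Cmod b ^ 2.
Proof.
  pose proof (Cmod_triangle a b); pose proof (Cmod_ge_0 (a + b)).
  pose proof (Cmod_ge_0 a); pose proof (Cmod_ge_0 b); pose proof (pow2_ge_0 (Cmod a - Cmod b)).
  assert (Cmod (a + b) ^ 2 <= (Cmod a + Cmod b) ^ 2) by (apply pow_incr; lra).
  nra.
Qed.

Lemma l2norm_sqr x : l2 x -> l2norm x ^ 2 = Series (abs2 x).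
Proof.
  intros x_l2; apply pow2_sqrt, (Series_ge0 (abs2 x)); auto.
Qed.

Lemma l2norm_ge0 x : 0 <= l2norm x.
Proof. apply sqrt_pos. Qed.

Lemma Cmod_le_l2norm x k : l2 x -> Cmod (x k) <= l2norm x.
Proof.
  intros x_l2; rewrite <- (sqrt_pow2 (Cmod (x k))) by apply Cmod_ge_0.
  apply sqrt_le_1_alt, (Rle_trans _ (sum_f_R0 (abs2 x) k)).
  - apply (term_le_sum_f_R0 (abs2 x) k k); auto.
  - apply (sum_f_R0_le_Series (abs2 x)); auto.
Qed.

Lemma l2norm_lt_of_Series x eps : 0 < eps -> Series (abs2 x) < eps ^ 2 -> l2norm x < eps.
Proof.
  intros eps_gt0 lt_x; unfold l2norm; fold (abs2 x).
  destruct (Rle_or_lt (Series (abs2 x)) 0).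
  - rewrite sqrt_neg_0 by assumption; exact eps_gt0.
  - rewrite <- (sqrt_pow2 eps) by lra; apply sqrt_lt_1_alt; lra.
Qed.

Lemma Series_le_of_l2norm x y K : l2 x -> l2 y -> 0 <= K ->
  l2norm x <= K * l2norm y -> Series (abs2 x) <= K ^ 2 * Series (abs2 y).
Proof.
  intros x_l2 y_l2 K_ge0 le_xy.
  rewrite <- (l2norm_sqr x x_l2), <- (l2norm_sqr y y_l2), <- Rpow_mult_distr.
  apply pow_incr; split; [apply l2norm_ge0|exact le_xy].
Qed.

Lemma finsupp_l2 N x : finsupp N x -> l2 x.
Proof.
  intros x_supp; apply (ex_series_incr_n _ N).
  apply (ex_series_ext (fun _ => 0)); [|exact ex_series_zero].
  intros k; unfold abs2; rewrite x_supp by lia; rewrite Cmod_0; simpl; ring.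
Qed.

Definition unit_vec (k : nat) : nat -> C := fun j => if Nat.eqb j k then RtoC 1 else RtoC 0.

Lemma finsupp_unit_vec k N : (k < N)%nat -> finsupp N (unit_vec k).
Proof. intros kN j jN; unfold unit_vec; destruct (Nat.eqb_spec j k); [lia|reflexivity]. Qed.

Lemma op_bounded_by_nonneg T K : op_bounded_by T K -> 0 <= K.
Proof.
  intros T_K; destruct (Rle_or_lt 0 K) as [|K_lt0]; [assumption|exfalso].
  assert (e_l2 : l2 (unit_vec 0)) by (apply (finsupp_l2 1), finsupp_unit_vec; lia).
  assert (e_norm : 0 < l2norm (unit_vec 0)).
  { apply sqrt_lt_R0, (Rlt_le_trans _ (sum_f_R0 (abs2 (unit_vec 0)) 0));
      [|apply (sum_f_R0_le_Series (abs2 _)); auto].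
    simpl; unfold abs2, unit_vec; simpl; rewrite Cmod_1; lra. }
  specialize (T_K _ e_l2); pose proof (l2norm_ge0 (T (unit_vec 0))); nra.
Qed.

Lemma bdd_linear_op_bound T : bdd_linear_op T -> exists K, 0 <= K /\ op_bounded_by T K.
Proof. intros (_ & _ & K & T_K); exists K; split; [eapply op_bounded_by_nonneg|]; eassumption. Qed.

(** * Bounded operators are determined by their forms *)

Lemma Cconj_RtoC (c : R) : Cconj (RtoC c) = RtoC c.
Proof. unfold Cconj, RtoC; simpl; f_equal; ring. Qed.

Lemma csum_ext N f g : (forall k, (k < N)%nat -> f k = g k) -> csum N f = csum N g.
Proof.
  induction N as [|N IH]; intros fg; simpl; [reflexivity|].
  rewrite IH, fg; [reflexivity|lia|intros k kN; apply fg; lia].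
Qed.

Lemma csum_zero N : csum N (fun _ => RtoC 0) = RtoC 0.
Proof. induction N as [|N IH]; simpl; [reflexivity|rewrite IH; ring]. Qed.

Lemma csum_delta N k (g : nat -> C) :
  (k < N)%nat -> csum N (fun j => if Nat.eqb j k then g j else RtoC 0) = g k.
Proof.
  induction N as [|N IH]; intros kN; [lia|simpl].
  destruct (Nat.eqb_spec N k) as [->|Nk].
  - rewrite (csum_ext _ _ (fun _ => RtoC 0)).
    + rewrite csum_zero; ring.
    + intros j jk; destruct (Nat.eqb_spec j k); [lia|reflexivity].
  - rewrite IH by lia; ring.
Qed.

Lemma finip_unit_vec_r N k z : (k < N)%nat -> finip N z (unit_vec k) = z k.
Proof.
  intros kN; rewrite <- (csum_delta N k z kN); apply csum_ext; intros j _.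
  unfold unit_vec; destruct (Nat.eqb j k); rewrite Cconj_RtoC; ring.
Qed.

Lemma finip_unit_vec_l N k z : (k < N)%nat -> finip N (unit_vec k) z = Cconj (z k).
Proof.
  intros kN; rewrite <- (csum_delta N k (fun j => Cconj (z j)) kN); apply csum_ext; intros j _.
  unfold unit_vec; destruct (Nat.eqb j k); ring.
Qed.

Lemma op_eq_of_finip_l (S1 S2 : Op) :
  (forall N a b, finsupp N a -> finsupp N b -> finip N (S1 a) b = finip N (S2 a) b) ->
  forall N a, finsupp N a -> S1 a = S2 a.
Proof.
  intros S12 N a a_supp; apply functional_extensionality; intros k.
  rewrite <- (finip_unit_vec_r (Nat.max N (S k)) k (S1 a)),
    <- (finip_unit_vec_r (Nat.max N (S k)) k (S2 a)) by lia.
  apply S12; [intros j ?; apply a_supp; lia|apply finsupp_unit_vec; lia].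
Qed.

Lemma op_eq_of_finip_r (S1 S2 : Op) :
  (forall N a b, finsupp N a -> finsupp N b -> finip N a (S1 b) = finip N a (S2 b)) ->
  forall N b, finsupp N b -> S1 b = S2 b.
Proof.
  intros S12 N b b_supp; apply functional_extensionality; intros k.
  rewrite <- (Cconj_conj (S1 b k)), <- (Cconj_conj (S2 b k)); f_equal.
  rewrite <- (finip_unit_vec_l (Nat.max N (S k)) k (S1 b)),
    <- (finip_unit_vec_l (Nat.max N (S k)) k (S2 b)) by lia.
  apply S12; [apply finsupp_unit_vec; lia|intros j ?; apply b_supp; lia].
Qed.

Lemma l2_tail_small x eps : l2 x -> 0 < eps ->
  exists N, l2 (fun j => if (j <=? N)%nat then RtoC 0 else x j) /\
            l2norm (fun j => if (j <=? N)%nat then RtoC 0 else x j) <= eps.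
Proof.
  intros x_l2 eps_gt0.
  destruct (Series_remainder_small (abs2 x) (eps ^ 2) x_l2) as [N rem_small];
    [apply pow_lt, eps_gt0|].
  set (t := fun j => if (j <=? N)%nat then RtoC 0 else x j).
  destruct (Series_split_le (abs2 t) (abs2 x) N 0) as [t_l2 t_le]; auto.
  - intros k kN; unfold abs2, t; rewrite (proj2 (Nat.leb_le k N) kN), Cmod_0; simpl; lra.
  - intros k Nk; unfold abs2, t; rewrite (proj2 (Nat.leb_gt k N) Nk); lra.
  - exists N; split; [exact t_l2|]; change (sqrt (Series (abs2 t)) <= eps).
    rewrite <- (sqrt_pow2 eps) by lra; apply sqrt_le_1_alt; lra.
Qed.

Lemma Cmod_op_le T K x k : bdd_linear_op T -> op_bounded_by T K -> l2 x ->
  Cmod (T x k) <= K * l2norm x.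
Proof.
  intros (T_l2 & _) T_K x_l2; eapply Rle_trans; [apply Cmod_le_l2norm, T_l2, x_l2|].
  apply T_K, x_l2.
Qed.

Lemma le_0_of_le_mult_eps a c : 0 <= c -> (forall eps, 0 < eps -> a <= c * eps) -> a <= 0.
Proof.
  intros c_ge0 le_eps; apply Rnot_lt_le; intros a_gt0.
  specialize (le_eps (a / (2 * (c + 1))) ltac:(apply Rdiv_lt_0_compat; lra)).
  assert (c * (a / (2 * (c + 1))) < a); [|lra].
  apply (Rmult_lt_reg_r (2 * (c + 1))); [lra|]; field_simplify; nra.
Qed.

(* A truncation of [x] is finitely supported and leaves a small remainder. *)
Lemma bdd_linear_op_eq (S1 S2 : Op) : bdd_linear_op S1 -> bdd_linear_op S2 ->
  (forall N a, finsupp N a -> S1 a = S2 a) -> forall x, l2 x -> S1 x = S2 x.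
Proof.
  intros S1_bdd S2_bdd S12 x x_l2; apply functional_extensionality; intros k.
  destruct (bdd_linear_op_bound S1 S1_bdd) as [K1 [K1_ge0 S1_K]].
  destruct (bdd_linear_op_bound S2 S2_bdd) as [K2 [K2_ge0 S2_K]].
  enough (diff_small : Cmod (S1 x k - S2 x k) <= 0).
  { assert (diff0 : (S1 x k - S2 x k)%C = 0)
      by (apply Cmod_eq_0, Rle_antisym; [exact diff_small|apply Cmod_ge_0]).
    replace (S1 x k) with ((S1 x k - S2 x k) + S2 x k)%C by ring; rewrite diff0; ring. }
  apply (le_0_of_le_mult_eps _ (K1 + K2)); [lra|]; intros eps eps_gt0.
  destruct (l2_tail_small x eps x_l2 eps_gt0) as [N [t_l2 t_small]].
  set (t := fun j => if (j <=? N)%nat then RtoC 0 else x j) in *.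
  set (h := fun j => if (j <=? N)%nat then x j else RtoC 0).
  assert (h_supp : finsupp (S N) h)
    by (intros j Nj; unfold h; rewrite (proj2 (Nat.leb_gt j N)) by lia; reflexivity).
  assert (x_split : x = fun j => (h j + RtoC 1 * t j)%C).
  { apply functional_extensionality; intros j; unfold h, t; destruct (j <=? N)%nat; ring. }
  assert (h_l2 : l2 h) by exact (finsupp_l2 _ _ h_supp).
  assert (diff_t : (S1 x k - S2 x k = S1 t k - S2 t k)%C).
  { destruct S1_bdd as (_ & S1_lin & _), S2_bdd as (_ & S2_lin & _).
    rewrite x_split, S1_lin, S2_lin, (S12 _ h h_supp) by assumption; ring. }
  rewrite diff_t; unfold Cminus; eapply Rle_trans; [apply Cmod_triangle|]; rewrite Cmod_opp.
  pose proof (Cmod_op_le S1 K1 t k S1_bdd S1_K t_l2).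
  pose proof (Cmod_op_le S2 K2 t k S2_bdd S2_K t_l2).
  assert (K1 * l2norm t <= K1 * eps) by (apply Rmult_le_compat_l; assumption).
  assert (K2 * l2norm t <= K2 * eps) by (apply Rmult_le_compat_l; assumption).
  lra.
Qed.

Lemma extends_M_unique alpha T1 T2 : extends_M alpha T1 -> extends_M alpha T2 ->
  forall x, l2 x -> T1 x = T2 x.
Proof.
  intros [T1_bdd T1_form] [T2_bdd T2_form]; apply bdd_linear_op_eq; [assumption..|].
  apply op_eq_of_finip_l; intros N a b a_supp b_supp.
  rewrite T1_form, T2_form by assumption; reflexivity.
Qed.

Lemma adjoint_unique T1 T2 S1 S2 : is_adjoint T1 S1 -> is_adjoint T2 S2 ->
  (forall x, l2 x -> T1 x = T2 x) -> forall x, l2 x -> S1 x = S2 x.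
Proof.
  intros [S1_bdd S1_adj] [S2_bdd S2_adj] T12; apply bdd_linear_op_eq; [assumption..|].
  apply op_eq_of_finip_r; intros N a b a_supp b_supp.
  rewrite S1_adj, S2_adj, T12 by (eauto using finsupp_l2); reflexivity.
Qed.

(** * The diagonal operator D_r *)

Definition wcoef (r : R) (k : nat) : R := r ^ dweight (S k).
Definition wmul (r : R) (x : nat -> C) : nat -> C := fun k => (RtoC (wcoef r k) * x k)%C.
Definition sandwich (r : R) (T : Op) : Op := fun x => wmul r (T (wmul r x)).

Section Weight.

Variable r : R.
Hypothesis r_bounds : 0 <= r <= 1.

Lemma wcoef_bounds k : 0 <= wcoef r k <= 1.
Proof.
  unfold wcoef; split; [apply pow_le; lra|].
  rewrite <- (pow1 (dweight (S k))); apply pow_incr; lra.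
Qed.

Lemma wmul_l2 x : l2 x -> l2 (wmul r x) /\ Series (abs2 (wmul r x)) <= Series (abs2 x).
Proof.
  intros x_l2; apply (series_le_series (abs2 (wmul r x))); [|exact x_l2].
  intros k; split; [apply abs2_ge0|]; unfold abs2, wmul; rewrite Cmod_scale_sqr; fold (abs2 x k).
  pose proof (wcoef_bounds k); pose proof (abs2_ge0 x k).
  assert (wcoef r k ^ 2 <= 1) by nra; nra.
Qed.

Lemma l2norm_wmul_le x : l2 x -> l2norm (wmul r x) <= l2norm x.
Proof. intros x_l2; apply sqrt_le_1_alt, (wmul_l2 x x_l2). Qed.

Lemma wmul_linear x y c :
  wmul r (fun j => x j + c * y j)%C = (fun j => wmul r x j + c * wmul r y j)%C.
Proof. apply functional_extensionality; intros j; unfold wmul; ring. Qed.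

Lemma finsupp_wmul N x : finsupp N x -> finsupp N (wmul r x).
Proof. intros x_supp k Nk; unfold wmul; rewrite x_supp by assumption; ring. Qed.

Lemma finip_wmul N x y : finip N (wmul r x) y = finip N x (wmul r y).
Proof.
  apply csum_ext; intros k _; unfold wmul; rewrite Cmult_conj, Cconj_RtoC; ring.
Qed.

Lemma sandwich_bounded_by T K :
  bdd_linear_op T -> op_bounded_by T K -> op_bounded_by (sandwich r T) K.
Proof.
  intros (T_l2 & _) T_K x x_l2; pose proof (op_bounded_by_nonneg T K T_K).
  destruct (wmul_l2 x x_l2) as [wx_l2 _].
  apply (Rle_trans _ (l2norm (T (wmul r x)))); [apply l2norm_wmul_le, T_l2, wx_l2|].
  apply (Rle_trans _ (K * l2norm (wmul r x))); [apply T_K, wx_l2|].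
  apply Rmult_le_compat_l, l2norm_wmul_le; assumption.
Qed.

Lemma sandwich_bdd_linear T : bdd_linear_op T -> bdd_linear_op (sandwich r T).
Proof.
  intros T_bdd; pose proof T_bdd as (T_l2 & T_lin & K & T_K); split; [|split].
  - intros x x_l2; apply wmul_l2, T_l2, wmul_l2, x_l2.
  - intros x y c x_l2 y_l2 k; unfold sandwich; rewrite wmul_linear.
    change (RtoC (wcoef r k) * T (fun j => wmul r x j + c * wmul r y j) k
            = RtoC (wcoef r k) * T (wmul r x) k + c * (RtoC (wcoef r k) * T (wmul r y) k))%C.
    rewrite T_lin by (apply wmul_l2; assumption); ring.
  - exists K; apply sandwich_bounded_by; assumption.
Qed.

(* Additivity of [dweight] splits the weight of [alpha ((n+1) (m+1))] into the
   diagonal entries at [n] and [m]. *)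
Lemma Mform_Dr alpha N a b : Mform (Dr r alpha) N a b = Mform alpha N (wmul r a) (wmul r b).
Proof.
  apply csum_ext; intros n _; apply csum_ext; intros m _.
  unfold Dr, wmul, wcoef; rewrite Cmult_conj, Cconj_RtoC.
  replace ((n + 1) * (m + 1))%nat with (S n * S m)%nat by lia.
  rewrite (PrimeWeight.dweight_mul (S n) (S m) eq_refl eq_refl), pow_add, RtoC_mult; ring.
Qed.

Lemma sandwich_extends_M alpha T : extends_M alpha T -> extends_M (Dr r alpha) (sandwich r T).
Proof.
  intros [T_bdd T_form]; split; [now apply sandwich_bdd_linear|].
  intros N a b a_supp b_supp; unfold sandwich.
  rewrite finip_wmul, T_form, Mform_Dr by (apply finsupp_wmul; assumption); reflexivity.
Qed.

Lemma sandwich_is_adjoint T Tadj :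
  is_adjoint T Tadj -> is_adjoint (sandwich r T) (sandwich r Tadj).
Proof.
  intros [Tadj_bdd Tadj_adj]; split; [now apply sandwich_bdd_linear|].
  intros N a b a_supp b_supp; unfold sandwich.
  rewrite <- finip_wmul, Tadj_adj, finip_wmul by (apply finsupp_wmul; assumption); reflexivity.
Qed.

End Weight.

(** * Strong convergence as r -> 1 *)

Lemma one_sub_pow_le r w : 0 <= r <= 1 -> 1 - r ^ w <= INR w * (1 - r).
Proof.
  intros r_bounds; induction w as [|w IH]; [simpl; lra|]; rewrite S_INR; simpl pow.
  assert (r ^ w <= 1) by (rewrite <- (pow1 w); apply pow_incr; lra).
  assert (0 <= r ^ w) by (apply pow_le; lra).
  nra.
Qed.

Lemma quadratic_small_near_one c eps : 0 <= c -> 0 < eps ->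
  exists delta, 0 < delta <= 1 /\ forall r, 1 - delta < r < 1 -> c * (1 - r) ^ 2 <= eps.
Proof.
  intros c_ge0 eps_gt0; exists (Rmin 1 (eps / (c + 1))).
  assert (0 < eps / (c + 1)) by (apply Rdiv_lt_0_compat; lra).
  pose proof (Rmin_l 1 (eps / (c + 1))); pose proof (Rmin_r 1 (eps / (c + 1))).
  split; [split; [apply Rmin_glb_lt|]; lra|]; intros r r_near.
  assert (c * (eps / (c + 1)) <= eps).
  { apply (Rmult_le_reg_r (c + 1)); [lra|]; field_simplify; nra. }
  assert ((1 - r) ^ 2 <= 1 - r) by nra.
  assert (c * (1 - r) <= c * (eps / (c + 1))) by (apply Rmult_le_compat_l; lra).
  nra.
Qed.

(* Split at [N] with a small remainder: on the first [N + 1] terms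
   [1 - wcoef r k <= W (1 - r)] by Bernoulli's inequality, where [W] bounds
   the weights there. *)
Lemma Series_wcoef_defect_small (a : nat -> R) eps :
  (forall k, 0 <= a k) -> ex_series a -> 0 < eps ->
  exists delta, 0 < delta <= 1 /\ forall r, 1 - delta < r < 1 ->
    ex_series (fun k => (1 - wcoef r k) ^ 2 * a k) /\
    Series (fun k => (1 - wcoef r k) ^ 2 * a k) <= eps.
Proof.
  intros a_ge0 a_sum eps_gt0.
  destruct (Series_remainder_small a (eps / 2) a_sum) as [N rem_small]; [lra|].
  set (W := sum_f_R0 (fun k => INR (dweight (S k))) N).
  assert (weight_le : forall k, (k <= N)%nat -> INR (dweight (S k)) <= W)
    by (intros k kN; apply (term_le_sum_f_R0 (fun k => INR (dweight (S k)))); auto using pos_INR).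
  assert (W_ge0 : 0 <= W) by (apply cond_pos_sum; intros; apply pos_INR).
  assert (a_le : forall k, a k <= Series a)
    by (intros k; eapply Rle_trans; [apply (term_le_sum_f_R0 a k k)|apply sum_f_R0_le_Series]; auto).
  assert (SA_ge0 : 0 <= Series a) by (apply Series_ge0; assumption).
  destruct (quadratic_small_near_one (INR (S N) * (W ^ 2 * Series a)) (eps / 2))
    as [delta [delta_bounds near]]; [apply Rmult_le_pos; [apply pos_INR|nra]|lra|].
  exists delta; split; [exact delta_bounds|]; intros r r_near.
  specialize (near r r_near).
  destruct (Series_split_le (fun k => (1 - wcoef r k) ^ 2 * a k) a N
              ((W * (1 - r)) ^ 2 * Series a)) as [defect_sum defect_le]; auto.
  - intros k; pose proof (wcoef_bounds r ltac:(lra) k); apply Rmult_le_pos; [nra|auto].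
  - intros k kN; pose proof (wcoef_bounds r ltac:(lra) k).
    assert (1 - wcoef r k <= W * (1 - r)).
    { eapply Rle_trans; [apply one_sub_pow_le; lra|].
      apply Rmult_le_compat_r; [lra|auto]. }
    assert ((1 - wcoef r k) ^ 2 <= (W * (1 - r)) ^ 2) by (apply pow_incr; lra).
    apply Rmult_le_compat; auto; nra.
  - intros k _; pose proof (wcoef_bounds r ltac:(lra) k); pose proof (a_ge0 k).
    assert ((1 - wcoef r k) ^ 2 <= 1) by nra; nra.
  - split; [exact defect_sum|].
    assert (INR (S N) * ((W * (1 - r)) ^ 2 * Series a)
            = INR (S N) * (W ^ 2 * Series a) * (1 - r) ^ 2) by ring.
    lra.
Qed.

(* [sandwich r T x - T x = D T (D x - x) + (D - 1) T x] with [D = wmul r],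
   and both terms are controlled by [Series_wcoef_defect_small]. *)
Lemma sandwich_SOT_conv T : bdd_linear_op T -> SOT_conv_left1 (fun r => sandwich r T) T.
Proof.
  intros T_bdd x x_l2 eps eps_gt0.
  destruct (bdd_linear_op_bound T T_bdd) as [K [K_ge0 T_K]].
  pose proof T_bdd as (T_l2 & T_lin & _).
  set (eta := eps ^ 2 / (4 * (K ^ 2 + 1))).
  assert (eta_gt0 : 0 < eta) by (apply Rdiv_lt_0_compat; [apply pow_lt|]; nra).
  destruct (Series_wcoef_defect_small (abs2 x) eta) as [dx [dx_bounds x_near]]; auto.
  destruct (Series_wcoef_defect_small (abs2 (T x)) eta) as [dTx [dTx_bounds Tx_near]];
    [auto|apply T_l2, x_l2|exact eta_gt0|].
  exists (Rmin dx dTx); split; [apply Rmin_glb_lt; lra|].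
  intros r r_near; pose proof (Rmin_l dx dTx); pose proof (Rmin_r dx dTx).
  destruct (x_near r ltac:(lra)) as [x_defect_sum x_defect_le].
  destruct (Tx_near r ltac:(lra)) as [Tx_defect_sum Tx_defect_le].
  set (u := fun j => (RtoC (wcoef r j - 1) * x j)%C).
  assert (abs2_u : forall k, abs2 u k = (1 - wcoef r k) ^ 2 * abs2 x k)
    by (intros k; unfold abs2, u; rewrite Cmod_scale_sqr; ring).
  destruct (series_le_series (abs2 u) (fun k => (1 - wcoef r k) ^ 2 * abs2 x k))
    as [u_l2 u_le]; [intros k; rewrite abs2_u; split; [rewrite <- abs2_u|]; auto; lra|auto|].
  assert (Tu_le : Series (abs2 (T u)) <= K ^ 2 * eta).
  { eapply Rle_trans; [exact (Series_le_of_l2norm (T u) u K (T_l2 u u_l2) u_l2 K_ge0 (T_K u u_l2))|].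
    apply Rmult_le_compat_l; [apply pow2_ge_0|lra]. }
  assert (wx_split : wmul r x = fun j => (x j + RtoC 1 * u j)%C).
  { apply functional_extensionality; intros j; unfold wmul, u; rewrite RtoC_minus; ring. }
  set (e := fun j => (sandwich r T x j - T x j)%C).
  assert (abs2_e : forall j,
    abs2 e j <= 2 * abs2 (T u) j + 2 * ((1 - wcoef r j) ^ 2 * abs2 (T x) j)).
  { intros j; pose proof (wcoef_bounds r ltac:(lra) j).
    assert (e_j : e j = (RtoC (wcoef r j) * T u j + RtoC (wcoef r j - 1) * T x j)%C).
    { unfold e, sandwich; unfold wmul at 1; rewrite wx_split, T_lin by assumption.
      rewrite RtoC_minus; ring. }
    unfold abs2 at 1; rewrite e_j; eapply Rle_trans; [apply Cmod_add_sqr_le|].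
    rewrite !Cmod_scale_sqr; fold (abs2 (T u) j) (abs2 (T x) j).
    pose proof (abs2_ge0 (T u) j); pose proof (abs2_ge0 (T x) j).
    assert (wcoef r j ^ 2 <= 1) by nra.
    replace ((wcoef r j - 1) ^ 2) with ((1 - wcoef r j) ^ 2) by ring; nra. }
  destruct (series_le_combination (abs2 e) (abs2 (T u))
              (fun k => (1 - wcoef r k) ^ 2 * abs2 (T x) k) 2 2) as [_ e_le];
    [lra|lra|auto| |intros j; split; [auto|apply abs2_e]|apply T_l2, u_l2|exact Tx_defect_sum|].
  { intros k; pose proof (abs2_ge0 (T x) k); pose proof (pow2_ge_0 (1 - wcoef r k)); nra. }
  apply l2norm_lt_of_Series; [exact eps_gt0|].
  assert (2 * (K ^ 2 * eta) + 2 * eta = eps ^ 2 / 2) by (unfold eta; field; nra).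
  assert (0 < eps ^ 2) by (apply pow_lt, eps_gt0).
  change (Series (abs2 e) < eps ^ 2); lra.
Qed.

Lemma SOT_conv_left1_ext (Tr Sr : R -> Op) T : SOT_conv_left1 Tr T ->
  (forall r, 0 < r < 1 -> forall x, l2 x -> Sr r x = Tr r x) -> SOT_conv_left1 Sr T.
Proof.
  intros Tr_conv Sr_eq x x_l2 eps eps_gt0.
  destruct (Tr_conv x x_l2 eps eps_gt0) as [delta [delta_gt0 conv]].
  exists (Rmin delta 1); split; [apply Rmin_glb_lt; lra|]; intros r r_near.
  pose proof (Rmin_l delta 1); pose proof (Rmin_r delta 1).
  rewrite Sr_eq by (lra || assumption); apply conv; lra.
Qed.

(** * Compactness *)

Definition strict_incr (f : nat -> nat) : Prop := forall n, (f n < f (S n))%nat.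

Lemma strict_incr_lt f a b : strict_incr f -> (a < b)%nat -> (f a < f b)%nat.
Proof. intros f_incr ab; induction ab as [|b _ IH]; [apply f_incr|specialize (f_incr b); lia]. Qed.

Lemma strict_incr_ge f n : strict_incr f -> (n <= f n)%nat.
Proof. intros f_incr; induction n as [|n IH]; [lia|specialize (f_incr n); lia]. Qed.

Lemma strict_incr_comp f g : strict_incr f -> strict_incr g -> strict_incr (fun n => f (g n)).
Proof. intros f_incr g_incr n; apply strict_incr_lt; auto. Qed.

Lemma Un_cv_subseq u l g : strict_incr g -> Un_cv u l -> Un_cv (fun n => u (g n)) l.
Proof.
  intros g_incr u_cv eps eps_gt0; destruct (u_cv eps eps_gt0) as [N HN]; exists N.
  intros n Nn; apply HN; pose proof (strict_incr_ge g n g_incr); lia.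
Qed.

(* Bolzano-Weierstrass gives a cluster value [l]; the subsequence picks, after
   each index, a term within [1 / (m + 1)] of [l]. *)
Lemma bounded_cv_subseq (u : nat -> R) c : (forall n, Rabs (u n) <= c) ->
  exists g l, strict_incr g /\ Un_cv (fun n => u (g n)) l.
Proof.
  intros u_bounded.
  destruct (Bolzano_Weierstrass u (fun v => - c <= v <= c) (compact_P3 (- c) c)) as [l l_adh].
  { intros n; apply Rabs_le_between, u_bounded. }
  assert (close : forall m : nat, exists p, (m <= p)%nat /\ Rabs (u p - l) < / (INR m + 1)).
  { intros m; assert (Hm : 0 < / (INR m + 1)) by (apply Rinv_0_lt_compat; pose proof (pos_INR m); lra).
    destruct (l_adh (disc l (mkposreal _ Hm)) m) as [p Hp];
      [exists (mkposreal _ Hm); intros y y_in; exact y_in|].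
    exists p; exact Hp. }
  destruct (choice _ close) as [F F_close].
  set (g := nat_rec (fun _ => nat) (F 0%nat) (fun _ p => F (S p))).
  assert (g_incr : strict_incr g) by (intros n; destruct (F_close (S (g n))); simpl; lia).
  exists g, l; split; [exact g_incr|].
  intros eps eps_gt0; destruct (archimed_cor1 eps eps_gt0) as [N [N_eps N_gt0]].
  exists N; intros n Nn; destruct n as [|n]; [lia|].
  destruct (F_close (S (g n))) as [_ close_n]; unfold R_dist; simpl.
  eapply Rlt_le_trans; [exact close_n|]; eapply Rle_trans; [|apply Rlt_le, N_eps].
  pose proof (strict_incr_ge g n g_incr).
  apply Rinv_le_contravar; [apply lt_0_INR; lia|].
  assert (INR N <= INR (S (g n))) by (apply le_INR; lia); lra.
Qed.

(* Cantor's diagonal argument: [E (S k)] refines [E k] so that coordinate [k]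
   converges along it, and [fun n => E (S n) n] is eventually a subsequence of
   every [E (S k)]. *)
Lemma diagonal_cv_subseq (u : nat -> nat -> R) c : (forall n k, Rabs (u n k) <= c) ->
  exists phi L, strict_incr phi /\ forall k, Un_cv (fun n => u (phi n) k) (L k).
Proof.
  intros u_bounded.
  destruct (choice (fun (fk : (nat -> nat) * nat) (gl : (nat -> nat) * R) =>
      strict_incr (fst gl) /\ Un_cv (fun n => u (fst fk (fst gl n)) (snd fk)) (snd gl)))
    as [P P_spec].
  { intros [f k]; destruct (bounded_cv_subseq (fun n => u (f n) k) c) as [g [l gl]];
      [intros n; apply u_bounded|exists (g, l); exact gl]. }
  set (E := nat_rec (fun _ => nat -> nat) (fun n => n)
              (fun k Ek n => Ek (fst (P (Ek, k)) n))).
  assert (E_S : forall k n, E (S k) n = E k (fst (P (E k, k)) n)) by reflexivity.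
  assert (E_incr : forall k, strict_incr (E k)).
  { induction k as [|k IH]; intros n; [simpl; lia|rewrite !E_S].
    apply strict_incr_lt; [exact IH|apply (proj1 (P_spec (E k, k)))]. }
  assert (E_refines : forall k j m, exists m', (m <= m')%nat /\ E (S k + j)%nat m = E (S k) m').
  { intros k j; induction j as [|j IH]; intros m.
    - exists m; rewrite Nat.add_0_r; split; [lia|reflexivity].
    - replace (S k + S j)%nat with (S (S k + j)) by lia; rewrite E_S.
      destruct (IH (fst (P (E (S k + j)%nat, (S k + j)%nat)) m)) as [m' [le_m' eq_m']].
      exists m'; split; [|exact eq_m'].
      pose proof (strict_incr_ge _ m (proj1 (P_spec (E (S k + j)%nat, (S k + j)%nat)))); lia. }
  exists (fun n => E (S n) n), (fun k => snd (P (E k, k))); split.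
  - intros n; rewrite (E_S (S n) (S n)); apply strict_incr_lt; [apply E_incr|].
    pose proof (strict_incr_ge _ (S n) (proj1 (P_spec (E (S n), S n)))); lia.
  - intros k eps eps_gt0; destruct (proj2 (P_spec (E k, k)) eps eps_gt0) as [N HN].
    exists (Nat.max N k); intros n Nn.
    destruct (E_refines k (n - k)%nat n) as [m [le_m eq_m]].
    replace (S k + (n - k))%nat with (S n) in eq_m by lia.
    rewrite eq_m, E_S; apply HN; lia.
Qed.

Definition Ccv (u : nat -> C) (l : C) : Prop :=
  forall eps, 0 < eps -> exists N, forall n, (N <= n)%nat -> Cmod (u n - l) < eps.

Lemma Cmod_le_Re_Im (z : C) : Cmod z <= Rabs (fst z) + Rabs (snd z).
Proof.
  pose proof (Rabs_pos (fst z)); pose proof (Rabs_pos (snd z)).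
  unfold Cmod; rewrite <- (sqrt_pow2 (Rabs (fst z) + Rabs (snd z))) by lra.
  apply sqrt_le_1_alt; rewrite <- (pow2_abs (fst z)), <- (pow2_abs (snd z)); nra.
Qed.

Lemma diagonal_Ccv_subseq (z : nat -> nat -> C) c : (forall n k, Cmod (z n k) <= c) ->
  exists phi L, strict_incr phi /\ forall k, Ccv (fun n => z (phi n) k) (L k).
Proof.
  intros z_bounded.
  assert (parts_bounded : forall w : C, Rabs (fst w) <= Cmod w /\ Rabs (snd w) <= Cmod w)
    by (intros w; pose proof (Rmax_Cmod w); split;
        (eapply Rle_trans; [|eassumption]); [apply Rmax_l|apply Rmax_r]).
  destruct (diagonal_cv_subseq (fun n k => fst (z n k)) c) as [phi1 [Re_L [phi1_incr Re_cv]]].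
  { intros n k; eapply Rle_trans; [apply parts_bounded|apply z_bounded]. }
  destruct (diagonal_cv_subseq (fun n k => snd (z (phi1 n) k)) c) as [phi2 [Im_L [phi2_incr Im_cv]]].
  { intros n k; eapply Rle_trans; [apply parts_bounded|apply z_bounded]. }
  exists (fun n => phi1 (phi2 n)), (fun k => (Re_L k, Im_L k)).
  split; [now apply strict_incr_comp|]; intros k eps eps_gt0.
  destruct (Un_cv_subseq _ _ phi2 phi2_incr (Re_cv k) (eps / 2)) as [N1 HN1]; [lra|].
  destruct (Im_cv k (eps / 2)) as [N2 HN2]; [lra|].
  exists (Nat.max N1 N2); intros n Nn; eapply Rle_lt_trans; [apply Cmod_le_Re_Im|].
  specialize (HN1 n ltac:(lia)); specialize (HN2 n ltac:(lia)); unfold R_dist in *; simpl in *.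
  unfold Rminus in *; lra.
Qed.

Lemma Ccv_Cmod_sqr u l : Ccv u l -> Un_cv (fun n => Cmod (u n) ^ 2) (Cmod l ^ 2).
Proof.
  intros u_cv.
  assert (Cmod_cv : is_lim_seq (fun n => Cmod (u n)) (Cmod l)).
  { apply is_lim_seq_Reals; intros eps eps_gt0; destruct (u_cv eps eps_gt0) as [N HN].
    exists N; intros n Nn; specialize (HN n Nn); unfold R_dist; apply Rabs_def1.
    - pose proof (Cmod_triangle (u n - l) l); replace (u n - l + l)%C with (u n) in * by ring; lra.
    - pose proof (Cmod_triangle (l - u n) (u n)); replace (l - u n + u n)%C with l in * by ring.
      replace (l - u n)%C with (- (u n - l))%C in * by ring; rewrite Cmod_opp in *; lra. }
  apply is_lim_seq_Reals; replace (Cmod l ^ 2) with (Cmod l * Cmod l) by ring.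
  apply (is_lim_seq_ext (fun n => Cmod (u n) * Cmod (u n))); [intros n; ring|].
  apply is_lim_seq_mult'; assumption.
Qed.

Lemma sum_f_R0_cv (f : nat -> nat -> R) g N :
  (forall k, Un_cv (fun n => f n k) (g k)) -> Un_cv (fun n => sum_f_R0 (f n) N) (sum_f_R0 g N).
Proof. intros f_cv; induction N as [|N IH]; simpl; [apply f_cv|apply CV_plus; auto]. Qed.

Lemma Un_cv_le_const u l A : Un_cv u l -> (forall n, u n <= A) -> l <= A.
Proof.
  intros u_cv u_le; apply (is_lim_seq_le u (fun _ => A) l A u_le);
    [apply is_lim_seq_Reals, u_cv|apply is_lim_seq_const].
Qed.

Lemma Ccv_l2_limit (z : nat -> nat -> C) (L : nat -> C) A :
  (forall n, l2 (z n)) -> (forall n, Series (abs2 (z n)) <= A) ->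
  (forall k, Ccv (fun n => z n k) (L k)) -> l2 L /\ Series (abs2 L) <= A.
Proof.
  intros z_l2 z_le L_cv; apply (series_of_bounded_sums (abs2 L)); [auto|]; intros N.
  apply (Un_cv_le_const (fun n => sum_f_R0 (abs2 (z n)) N)).
  - apply sum_f_R0_cv; intros k; apply Ccv_Cmod_sqr, L_cv.
  - intros n; eapply Rle_trans; [apply (sum_f_R0_le_Series (abs2 (z n))); [auto|apply z_l2]|apply z_le].
Qed.

Lemma uniform_on_initial (v : nat -> nat -> R) :
  (forall k eps, 0 < eps -> exists N, forall n, (N <= n)%nat -> v n k < eps) ->
  forall M eps, 0 < eps -> exists N, forall n, (N <= n)%nat -> forall k, (k <= M)%nat -> v n k < eps.
Proof.
  intros v_small M eps eps_gt0; induction M as [|M [N1 HN1]].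
  - destruct (v_small 0%nat eps eps_gt0) as [N HN]; exists N; intros n Nn k k0.
    replace k with 0%nat by lia; auto.
  - destruct (v_small (S M) eps eps_gt0) as [N2 HN2]; exists (Nat.max N1 N2); intros n Nn k kM.
    destruct (Nat.eq_dec k (S M)) as [->|]; [apply HN2; lia|apply HN1; lia].
Qed.

(* The first [M + 1] coordinates converge uniformly; beyond [M] the weights are
   small, and the remainder is controlled by the uniform l^2 bound [A]. *)
Lemma vanishing_weights_cv (z : nat -> nat -> C) (L : nat -> C) (d : nat -> R) A :
  (forall n, l2 (z n)) -> (forall n, Series (abs2 (z n)) <= A) ->
  l2 L -> Series (abs2 L) <= A -> (forall k, Ccv (fun n => z n k) (L k)) ->
  (forall k, 0 <= d k <= 1) ->
  (forall eta, 0 < eta -> exists M, forall k, (M < k)%nat -> d k ^ 2 <= eta) ->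
  forall eps, 0 < eps -> exists N, forall n, (N <= n)%nat ->
    l2norm (fun j => RtoC (d j) * z n j - RtoC (d j) * L j)%C < eps.
Proof.
  intros z_l2 z_le L_l2 L_le L_cv d_bounds d_vanish eps eps_gt0.
  assert (A_ge0 : 0 <= A) by (eapply Rle_trans; [apply (Series_ge0 (abs2 L))|]; auto).
  set (eta1 := eps ^ 2 / (16 * (A + 1))).
  assert (eta1_gt0 : 0 < eta1) by (apply Rdiv_lt_0_compat; [apply pow_lt|]; lra).
  destruct (d_vanish eta1 eta1_gt0) as [M d_small].
  set (eta2 := eps ^ 2 / (4 * (INR (S M) + 1))).
  assert (eta2_gt0 : 0 < eta2)
    by (apply Rdiv_lt_0_compat; [apply pow_lt|pose proof (pos_INR (S M))]; lra).
  destruct (uniform_on_initial (fun n k => Cmod (z n k - L k)) L_cv M (sqrt eta2))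
    as [N head_small]; [now apply sqrt_lt_R0|].
  exists N; intros n Nn.
  set (w := fun j => (RtoC (d j) * z n j - RtoC (d j) * L j)%C).
  assert (abs2_w : forall k, abs2 w k = d k ^ 2 * Cmod (z n k - L k) ^ 2).
  { intros k; unfold abs2, w; rewrite <- Cmod_scale_sqr; f_equal; f_equal; ring. }
  set (b := fun k => 2 * eta1 * abs2 (z n) k + 2 * eta1 * abs2 L k).
  assert (b_ge0 : forall k, 0 <= b k)
    by (intros k; unfold b; pose proof (abs2_ge0 (z n) k); pose proof (abs2_ge0 L k); nra).
  destruct (series_le_combination b (abs2 (z n)) (abs2 L) (2 * eta1) (2 * eta1))
    as [b_sum b_le]; [lra|lra|auto|auto|intros k; split; [auto|unfold b; lra]
                     |apply z_l2|exact L_l2|].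
  destruct (Series_split_le (abs2 w) b M eta2) as [_ w_le]; [auto| | |exact b_sum|].
  - intros k kM; rewrite abs2_w; pose proof (d_bounds k).
    specialize (head_small n Nn k kM); simpl in head_small.
    pose proof (Cmod_ge_0 (z n k - L k)); pose proof (pow2_sqrt eta2 ltac:(lra)).
    assert (Cmod (z n k - L k) ^ 2 < eta2) by nra.
    assert (d k ^ 2 <= 1) by nra; nra.
  - intros k Mk; rewrite abs2_w; specialize (d_small k Mk).
    assert (Cmod (z n k - L k) ^ 2 <= 2 * abs2 (z n) k + 2 * abs2 L k).
    { unfold abs2, Cminus; rewrite <- (Cmod_opp (L k)); apply Cmod_add_sqr_le. }
    pose proof (pow2_ge_0 (d k)); pose proof (pow2_ge_0 (Cmod (z n k - L k))).
    unfold b; nra.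
  - apply l2norm_lt_of_Series; [exact eps_gt0|].
    assert (0 <= sum_f_R0 b M) by (apply cond_pos_sum, b_ge0).
    assert (INR (S M) * eta2 < eps ^ 2 / 4).
    { unfold eta2; pose proof (pos_INR (S M)); pose proof (pow_lt eps 2 eps_gt0).
      apply (Rmult_lt_reg_r (4 * (INR (S M) + 1))); [lra|]; field_simplify; nra. }
    assert (2 * eta1 * Series (abs2 (z n)) + 2 * eta1 * Series (abs2 L) < eps ^ 2 / 2).
    { specialize (z_le n); pose proof (pow_lt eps 2 eps_gt0).
      assert (2 * eta1 * (Series (abs2 (z n)) + Series (abs2 L)) <= 2 * eta1 * (2 * A))
        by (apply Rmult_le_compat_l; lra).
      assert (4 * eta1 * A < eps ^ 2 / 2); [|nra].
      unfold eta1; apply (Rmult_lt_reg_r (16 * (A + 1))); [lra|]; field_simplify; nra. }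
    pose proof (pow_lt eps 2 eps_gt0); change (Series (abs2 w) < eps ^ 2); lra.
Qed.

Lemma wcoef_sqr_vanishes r : 0 < r < 1 ->
  forall eta, 0 < eta -> exists M, forall k, (M < k)%nat -> wcoef r k ^ 2 <= eta.
Proof.
  intros r_bounds eta eta_gt0.
  assert (r2_lt1 : Rabs (r ^ 2) < 1) by (rewrite Rabs_pos_eq by (apply pow_le; lra); nra).
  destruct (pow_lt_1_zero (r ^ 2) r2_lt1 eta eta_gt0) as [W HW].
  destruct (PrimeWeight.dweight_unbounded W) as [M HM].
  exists M; intros k Mk; specialize (HM (S k) ltac:(lia)).
  unfold wcoef; rewrite <- pow_mult, Nat.mul_comm, pow_mult.
  eapply Rle_trans; [apply Rle_abs|]; apply Rlt_le, HW; lia.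
Qed.

Lemma sandwich_compact r T : 0 < r < 1 -> bdd_linear_op T -> compact_op (sandwich r T).
Proof.
  intros r_bounds T_bdd xs xs_l2 [B xs_le].
  destruct (bdd_linear_op_bound T T_bdd) as [K [K_ge0 T_K]]; pose proof T_bdd as (T_l2 & _).
  set (z := fun n => T (wmul r (xs n))).
  assert (z_l2 : forall n, l2 (z n)) by (intros n; apply T_l2, wmul_l2, xs_l2; lra).
  assert (z_le : forall n, Series (abs2 (z n)) <= K ^ 2 * B ^ 2).
  { intros n; destruct (wmul_l2 r ltac:(lra) (xs n) (xs_l2 n)) as [wx_l2 wx_le].
    eapply Rle_trans; [exact (Series_le_of_l2norm _ _ K (z_l2 n) wx_l2 K_ge0 (T_K _ wx_l2))|].
    apply Rmult_le_compat_l; [apply pow2_ge_0|].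
    rewrite <- (l2norm_sqr (xs n) (xs_l2 n)) in wx_le.
    eapply Rle_trans; [exact wx_le|]; apply pow_incr; split; [apply l2norm_ge0|apply xs_le]. }
  destruct (diagonal_Ccv_subseq z (sqrt (K ^ 2 * B ^ 2))) as [phi [L [phi_incr L_cv]]].
  { intros n k; eapply Rle_trans; [apply Cmod_le_l2norm, z_l2|apply sqrt_le_1_alt, z_le]. }
  destruct (Ccv_l2_limit (fun n => z (phi n)) L (K ^ 2 * B ^ 2)) as [L_l2 L_le]; auto.
  exists phi; split; [exact phi_incr|]; exists (wmul r L); split; [apply wmul_l2; auto; lra|].
  apply (vanishing_weights_cv (fun n => z (phi n)) L (wcoef r) (K ^ 2 * B ^ 2)); auto.
  - intros k; apply wcoef_bounds; lra.
  - apply wcoef_sqr_vanishes, r_bounds.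
Qed.

Lemma compact_op_ext (S1 S2 : Op) : compact_op S1 -> (forall x, l2 x -> S2 x = S1 x) ->
  compact_op S2.
Proof.
  intros S1_compact S2_eq xs xs_l2 xs_bounded.
  destruct (S1_compact xs xs_l2 xs_bounded) as [phi [phi_incr [y [y_l2 conv]]]].
  exists phi; split; [exact phi_incr|]; exists y; split; [exact y_l2|].
  intros eps eps_gt0; destruct (conv eps eps_gt0) as [N HN]; exists N.
  intros k Nk; rewrite S2_eq by apply xs_l2; apply HN, Nk.
Qed.

Theorem lemma4 (alpha : nat -> C) (T Tadj : Op) :
  extends_M alpha T -> is_adjoint T Tadj ->
  (forall r, 0 < r < 1 -> exists Tr, extends_M (Dr r alpha) Tr) /\
  (forall r (Tr : Op), 0 < r < 1 -> extends_M (Dr r alpha) Tr ->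
     compact_op Tr /\ (forall K, op_bounded_by T K -> op_bounded_by Tr K)) /\
  (forall Tr Tradj : R -> Op,
     (forall r, 0 < r < 1 ->
        extends_M (Dr r alpha) (Tr r) /\ is_adjoint (Tr r) (Tradj r)) ->
     SOT_conv_left1 Tr T /\ SOT_conv_left1 Tradj Tadj).
Proof.
  intros T_ext T_adj.
  assert (sandwich_ext : forall r, 0 < r < 1 -> extends_M (Dr r alpha) (sandwich r T))
    by (intros r r_bounds; apply sandwich_extends_M; [lra|exact T_ext]).
  assert (Tr_eq : forall r Tr, 0 < r < 1 -> extends_M (Dr r alpha) Tr ->
                    forall x, l2 x -> Tr x = sandwich r T x)
    by (intros r Tr r_bounds Tr_ext; exact (extends_M_unique _ _ _ Tr_ext (sandwich_ext r r_bounds))).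
  split; [|split].
  - intros r r_bounds; exists (sandwich r T); exact (sandwich_ext r r_bounds).
  - intros r Tr r_bounds Tr_ext; split.
    + apply (compact_op_ext (sandwich r T)); [apply sandwich_compact, T_ext; exact r_bounds|].
      exact (Tr_eq r Tr r_bounds Tr_ext).
    + intros K T_K x x_l2; rewrite (Tr_eq r Tr r_bounds Tr_ext x x_l2).
      apply (sandwich_bounded_by r ltac:(lra) T K (proj1 T_ext) T_K x x_l2).
  - intros Tr Tradj Tr_spec; split.
    + apply (SOT_conv_left1_ext (fun r => sandwich r T)); [apply sandwich_SOT_conv, T_ext|].
      intros r r_bounds; exact (Tr_eq r (Tr r) r_bounds (proj1 (Tr_spec r r_bounds))).
    + apply (SOT_conv_left1_ext (fun r => sandwich r Tadj)); [apply sandwich_SOT_conv, T_adj|].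
      intros r r_bounds; destruct (Tr_spec r r_bounds) as [Tr_ext Tradj_adj].
      apply (adjoint_unique (Tr r) (sandwich r T)); [exact Tradj_adj| |exact (Tr_eq r _ r_bounds Tr_ext)].
      apply sandwich_is_adjoint; [lra|exact T_adj].
Qed.
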